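(* Let $(M,\Sigma)$ be a measurable space, $r\ge1$, and $\mu_1,\dots,\mu_r$ non-atomic countably additive finite measures on $\Sigma$; put $\mu=\frac1r\sum_{i=1}^r\mu_i$. For $k\ge1$ let $t(k)=k\bmod r$ if this is nonzero and $t(k)=r$ otherwise. Let $(H_k)_{k\ge1}$ be a sequence of measurable sets such that for every $k$: $H_k\subseteq M\setminus\bigcup_{i=1}^{k-1}H_i$, $H_k$ admits a strong solution (a partition $H_k=F_1\sqcup\dots\sqcup F_r$ with $\mu_i(F_i)\ge\mu_i(F_j)$ for all $i,j$), and $\mu_{t(k)}(H_k)\ge 2^{-(r-1)}\mu_{t(k)}\bigl(M\setminus\bigcup_{i=1}^{k-1}H_i\bigr)$. For $s\ge0$ let $M_s=M\setminus\bigcup_{i=1}^{sr}H_i$ (so $M_0=M$). Then for every $s\ge1$, $$\mu(M_s)\le\frac{2^{r-1}-1}{2^{r-1}}\,\mu(M_{s-1}).$$ *)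

From mathcomp Require Import all_boot all_order all_algebra.
From mathcomp Require Import all_classical all_reals all_analysis.
Set Implicit Arguments. Unset Strict Implicit. Unset Printing Implicit Defensive.
Import Order.TTheory GRing.Theory Num.Theory.
Local Open Scope classical_set_scope.
Local Open Scope ring_scope.
Local Open Scope ereal_scope.

Definition non_atomic d (T : measurableType d) (R : realType)
  (m : set T -> \bar R) : Prop :=
  forall A, measurable A -> 0 < m A ->
    exists B, [/\ measurable B, B `<=` A & 0 < m B < m A].

Definition tidx (r k : nat) : nat := if (k %% r == 0)%N then r else (k %% r)%N.

Definition idx1 (r : nat) : set nat := [set i | (1 <= i <= r)%N].

Definition strong_solution d (T : measurableType d) (R : realType) (r : nat)
  (mu : nat -> set T -> \bar R) (H : set T) : Prop :=
  exists F : nat -> set T,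
    [/\ forall i, idx1 r i -> measurable (F i),
        H = \bigcup_(i in idx1 r) F i,
        forall i j, idx1 r i -> idx1 r j -> i <> j -> F i `&` F j = set0
      & forall i j, idx1 r i -> idx1 r j -> mu i (F j) <= mu i (F i)].

Definition avg_measure d (T : measurableType d) (R : realType) (r : nat)
  (mu : nat -> set T -> \bar R) (A : set T) : \bar R :=
  ((r%:R)^-1)%:E * \sum_(1 <= i < r.+1) mu i A.

Definition Hunion T (H : nat -> set T) (k : nat) : set T :=
  \bigcup_(i in [set i | (1 <= i < k)%N]) H i.

From mathcomp Require Import all_boot all_order all_algebra.
From mathcomp Require Import all_classical all_reals all_analysis.
From mathcomp Require Import lra.
Set Implicit Arguments. Unset Strict Implicit. Unset Printing Implicit Defensive.
Import Order.TTheory GRing.Theory Num.Theory.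
Local Open Scope classical_set_scope.
Local Open Scope ring_scope.
Local Open Scope ereal_scope.

(* The block of steps (s-1)r+1, ..., sr visits every index i = t(k) exactly
   once.  At the step k with t(k) = i, removing H_k keeps at most a fraction
   1 - 2^-(r-1) of the mu_i-measure of what was left, and the remaining sets
   only shrink during the block; hence mu_i(M_s) <= (1 - 2^-(r-1)) mu_i(M_(s-1))
   for every i, and averaging over i gives the claim. *)

Lemma measureD_frac_le d (T : measurableType d) (R : realType)
    (m : {finite_measure set T -> \bar R}) (A B : set T) (c : R) :
  measurable A -> measurable B -> B `<=` A ->
  c%:E * m A <= m B -> m (A `\` B) <= (1 - c)%:E * m A.
Proof.
move=> mA mB BA; have mAB : measurable (A `\` B) by exact: measurableD.
have -> : m A = m (A `\` B) + m B.
  by rewrite -measureU ?setDKI // setUC setDUK.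
rewrite -(fineK (fin_num_measure m _ mAB)) -(fineK (fin_num_measure m _ mB)).
rewrite -EFinD -!EFinM !lee_fin mulrBl mul1r; lra.
Qed.

Section Hunion.
Variables (T : Type) (H : nat -> set T).

Lemma subset_Hunion m n : (m <= n)%N -> Hunion H m `<=` Hunion H n.
Proof.
move=> mn x [i /= /andP[i1 im] Hx]; exists i => //=.
by rewrite i1 (leq_trans im).
Qed.

Lemma HunionS k : (1 <= k)%N -> Hunion H k.+1 = Hunion H k `|` H k.
Proof.
move=> k1; apply/seteqP; split => x.
  move=> [i /= /andP[i1]]; rewrite ltnS leq_eqVlt => /orP[/eqP-> | ik] Hx.
    by right.
  by left; exists i => //=; rewrite i1.
case=> [|Hx]; last by exists k => //=; rewrite k1 /=.
by apply: subset_Hunion.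
Qed.

End Hunion.

Lemma measurable_Hunion d (T : measurableType d) (H : nat -> set T) k :
  (forall k, (1 <= k)%N -> measurable (H k)) -> measurable (Hunion H k).
Proof. by move=> mH; apply: bigcup_measurable => i /= /andP[+ _]; exact: mH. Qed.

Lemma tidx_block r s i : (1 <= i <= r)%N -> tidx r (s * r + i) = i.
Proof.
move=> /andP[i1 ir]; rewrite /tidx modnMDl.
have [ilt | rlei] := ltnP i r; first by rewrite modn_small // eqn0Ngt i1.
have -> : i = r by apply/eqP; rewrite eqn_leq ir rlei.
by rewrite modnn.
Qed.

Section Exhaustion.
Variables (d : measure_display) (T : measurableType d) (R : realType).
Variables (m : {finite_measure set T -> \bar R}) (H : nat -> set T) (c : R).
Hypothesis measurable_H : forall k, (1 <= k)%N -> measurable (H k).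
Hypothesis H_disjoint : forall k, (1 <= k)%N -> H k `<=` ~` Hunion H k.

Lemma measure_exhaust_step k : (1 <= k)%N ->
  c%:E * m (~` Hunion H k) <= m (H k) ->
  m (~` Hunion H k.+1) <= (1 - c)%:E * m (~` Hunion H k).
Proof.
move=> k1; rewrite HunionS // setCU -setDE; apply: measureD_frac_le => //.
- exact/measurableC/measurable_Hunion.
- exact: measurable_H.
- exact: H_disjoint.
Qed.

Lemma measure_exhaust_mono k l : (k <= l)%N ->
  m (~` Hunion H l) <= m (~` Hunion H k).
Proof.
move=> kl; apply: le_measure; rewrite ?inE; try exact/measurableC/measurable_Hunion.
exact/subsetC/subset_Hunion.
Qed.

Lemma measure_exhaust_block (r s i : nat) : (c <= 1)%R -> (1 <= i <= r)%N ->
  c%:E * m (~` Hunion H (s * r + i)) <= m (H (s * r + i)) ->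
  m (~` Hunion H (s.+1 * r).+1) <= (1 - c)%:E * m (~` Hunion H (s * r).+1).
Proof.
move=> c1 /andP[i1 ir] hk; set k := (s * r + i)%N.
have k1 : (1 <= k)%N by rewrite (leq_trans i1) ?leq_addl.
have k_first : ((s * r).+1 <= k)%N by rewrite -addn1 leq_add2l.
have k_last : (k.+1 <= (s.+1 * r).+1)%N by rewrite ltnS mulSn addnC leq_add2l.
apply: le_trans (measure_exhaust_mono k_last) _.
apply: le_trans (measure_exhaust_step k1 hk) _.
apply: lee_wpmul2l; first by rewrite lee_fin subr_ge0.
exact: measure_exhaust_mono k_first.
Qed.

End Exhaustion.

Lemma avg_measure_le d (T : measurableType d) (R : realType) (r : nat)
    (mu : nat -> set T -> \bar R) (A B : set T) (c : R) :
  (0 <= c)%R -> (forall i, idx1 r i -> 0 <= mu i B) ->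
  (forall i, idx1 r i -> mu i A <= c%:E * mu i B) ->
  avg_measure r mu A <= c%:E * avg_measure r mu B.
Proof.
move=> c0 muB0 muAB; rewrite /avg_measure muleCA.
apply: lee_wpmul2l; first by rewrite lee_fin invr_ge0.
have idx1_range i : (1 <= i < r.+1)%N && true -> idx1 r i.
  by rewrite andbT /idx1 /= ltnS.
rewrite big_nat_cond [in leRHS]big_nat_cond ge0_sume_distrr; last first.
  by move=> i /idx1_range; exact: muB0.
by apply: lee_sum => i /idx1_range; exact: muAB.
Qed.

Theorem lemma4 (d : measure_display) (T : measurableType d) (R : realType)
  (r : nat) (mu : nat -> {finite_measure set T -> \bar R}) (H : nat -> set T) :
  (1 <= r)%N ->
  (forall i, idx1 r i -> non_atomic (mu i)) ->
  (forall k, (1 <= k)%N -> measurable (H k)) ->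
  (forall k, (1 <= k)%N -> H k `<=` ~` Hunion H k) ->
  (forall k, (1 <= k)%N -> strong_solution r (fun i => mu i) (H k)) ->
  (forall k, (1 <= k)%N ->
     (((2%:R ^+ r.-1 : R)^-1)%:E * mu (tidx r k) (~` Hunion H k)
       <= mu (tidx r k) (H k))) ->
  forall s : nat, (1 <= s)%N ->
    avg_measure r (fun i => mu i) (~` Hunion H (s * r).+1)
    <= (((2%:R ^+ r.-1 - 1) / 2%:R ^+ r.-1 : R))%:E
       * avg_measure r (fun i => mu i) (~` Hunion H (s.-1 * r).+1).
Proof.
move=> _ _ mH Hdisj _ Hlarge [//|s] _ /=.
set c : R := ((2%:R ^+ r.-1)^-1)%R.
have c1 : (c <= 1)%R by rewrite invf_le1 ?exprn_ege1 ?ler1n.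
have -> : ((2%:R ^+ r.-1 - 1) / 2%:R ^+ r.-1 = 1 - c :> R)%R.
  by rewrite mulrBl divff // mul1r.
apply: avg_measure_le; first by rewrite subr_ge0.
  by move=> i _; apply: measure_ge0.
move=> i ir; apply: (measure_exhaust_block mH Hdisj c1 ir).
have k1 : (1 <= s * r + i)%N by case/andP: ir => i1 _; rewrite (leq_trans i1) ?leq_addl.
by have := Hlarge _ k1; rewrite tidx_block.
Qed.
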